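(* Let $Y=\tilde S\cup\tilde P\subset\mathbb P^5$ be a reducible quartic surface which is the union of a plane $\tilde P$ and a smooth cubic rational normal scroll $\tilde S$ such that $\tilde S\cap\tilde P$ is a line $\tilde L$. Then $Y$ is a (generalized) variety with one apparent double point if and only if $\tilde L^2=0$ on $\tilde S$ (i.e. $\tilde L$ is a line of the ruling of $\tilde S$), and $Y$ is secant defective (no secant line to $Y$ passes through a general point of $\mathbb P^5$) if and only if $\tilde L^2=-1$ on $\tilde S$ (i.e. $\tilde L$ is the directrix line of $\tilde S$).
   Context: An equidimensional reduced scheme $X\subset\mathbb P^{2n+1}$ of dimension $n$ is a (generalized) variety with one apparent double point (OADP) if through a general point of $\mathbb P^{2n+1}$ there passes a unique secant line to $X$, i.e. a unique line cutting $X$ scheme-theoretically in a reduced scheme of length two. A smooth cubic rational normal scroll $S(1,2)\subset\mathbb P^4$ is isomorphic to the blow-up of $\mathbb P^2$ at a point; its lines are the fibers of the ruling (self-intersection $0$) and the directrix (the exceptional curve, self-intersection $-1$). *)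

From HB Require Import structures.
From mathcomp Require Import all_boot all_order all_algebra all_field.
From mathcomp Require Import mpoly.
Set Implicit Arguments. Unset Strict Implicit. Unset Printing Implicit Defensive.
Import GRing.Theory.
Local Open Scope ring_scope.

(* Points of P^5 are represented by nonzero row vectors of algC^6 (affine
   cone); projective subvarieties by scale-invariant predicates on vectors. *)
Definition vpoly := {mpoly algC[6]}.
Definition evalv (f : vpoly) (x : 'rV[algC]_6) : algC := f.@[fun i => x 0 i].

(* Standard smooth cubic scroll S(1,2) in P^4: points
   [a l : b l : a^2 m : a b m : b^2 m]. *)
Definition scroll_pt (a b l m : algC) : 'rV[algC]_5 :=
  \row_(j < 5) nth 0 [:: a * l; b * l; a ^+ 2 * m; a * b * m; b ^+ 2 * m] j.

(* Cone over the image of S(1,2) under the linear embedding P^4 -> P^5 given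
   by A (A row_free). *)
Definition on_scroll (A : 'M[algC]_(5, 6)) (x : 'rV[algC]_6) : Prop :=
  exists a b l m, x = scroll_pt a b l m *m A.

Definition is_ruling_line (A : 'M[algC]_(5, 6)) (C : 'M[algC]_(2, 6)) : Prop :=
  exists a b : algC, (a != 0 \/ b != 0) /\
    (C == col_mx (scroll_pt a b 1 0 *m A) (scroll_pt a b 0 1 *m A))%MS.

Definition is_directrix (A : 'M[algC]_(5, 6)) (C : 'M[algC]_(2, 6)) : Prop :=
  (C == col_mx (scroll_pt 1 0 1 0 *m A) (scroll_pt 0 1 1 0 *m A))%MS.

Definition vanishes_on (Y : 'rV[algC]_6 -> Prop) (f : vpoly) : Prop :=
  forall x, Y x -> evalv f x = 0.

Definition restrict_line (f : vpoly) (q w : 'rV[algC]_6) : {poly algC} :=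
  (map_mpoly (@polyC algC) f).@[fun i => (q 0 i)%:P + (w 0 i) *: 'X].

(* A secant line: a projective line (row space of a rank 2 matrix M) cutting Y
   scheme-theoretically in a reduced scheme of length two: set-theoretically
   exactly two distinct points q1, q2, and at each of them the intersection
   scheme is reduced, i.e. some equation of Y restricts to the line with a
   simple zero there. *)
Definition secant_line (Y : 'rV[algC]_6 -> Prop) (M : 'M[algC]_(2, 6)) : Prop :=
  \rank M = 2%N /\
  exists q1 q2 : 'rV[algC]_6,
    [/\ (q1 <= M)%MS, (q2 <= M)%MS, \rank (col_mx q1 q2) = 2%N, Y q1 & Y q2] /\
    (forall x, (x <= M)%MS -> x != 0 -> Y x ->
       \rank (col_mx x q1) = 1%N \/ \rank (col_mx x q2) = 1%N) /\
    (exists f, vanishes_on Y f /\ (restrict_line f q1 q2)`_1 != 0) /\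
    (exists f, vanishes_on Y f /\ (restrict_line f q2 q1)`_1 != 0).

(* A property holds at a general point of P^5: on a nonempty Zariski open
   subset, complement of the zero locus of a nonzero homogeneous polynomial. *)
Definition general_point (P : 'rV[algC]_6 -> Prop) : Prop :=
  exists g : vpoly, g != 0 /\ (exists d, all (fun m => mdeg m == d) (msupp g)) /\
    forall x : 'rV[algC]_6, x != 0 -> evalv g x != 0 -> P x.

Definition OADP (Y : 'rV[algC]_6 -> Prop) : Prop :=
  general_point (fun x =>
    (exists M, secant_line Y M /\ (x <= M)%MS) /\
    forall M1 M2, secant_line Y M1 -> (x <= M1)%MS ->
                  secant_line Y M2 -> (x <= M2)%MS -> (M1 == M2)%MS).

Definition secant_defective (Y : 'rV[algC]_6 -> Prop) : Prop :=
  general_point (fun x => forall M, (x <= M)%MS -> ~ secant_line Y M).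

Definition scroll_plane_union (A : 'M[algC]_(5, 6)) (B : 'M[algC]_(3, 6))
  (x : 'rV[algC]_6) : Prop := on_scroll A x \/ (x <= B)%MS.

From HB Require Import structures.
From mathcomp Require Import all_boot all_order all_algebra all_field.
From mathcomp Require Import mpoly.
From mathcomp Require Import ring.
Set Implicit Arguments. Unset Strict Implicit. Unset Printing Implicit Defensive.
Import GRing.Theory.
Local Open Scope ring_scope.

(* Write x = u A + t p with p a point of the plane off the P^4 of the scroll.
   Scroll points have t = 0, and the plane is the set of points whose u lies on
   the line L = scroll /\ plane; comparing the quadratic equations of S(1,2) at
   two points of L and at their sum shows that L is a ruling or the directrix.
   If L is the directrix, a secant line through a point x with t <> 0 joins a
   scroll point to a plane point, which forces u(x) onto the cone over the conic
   u2 u4 = u3^2: a general x lies on no secant line.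
   If L is a ruling, projecting from the plane restricts on the scroll to the
   projection of S(1,2) from one of its fibres, which is birational onto P^2:
   a general x has a unique scroll point s with x - s in the plane, and the
   line through s and x is the unique secant line through x.
   Both properties hold at a general point, so they exclude each other. *)

Section RowSpaces.
Variable F : fieldType.

Lemma eqmx_sub_rank m1 m2 n (X : 'M[F]_(m1, n)) (Y : 'M[F]_(m2, n)) :
  (X <= Y)%MS -> (\rank Y <= \rank X)%N -> (X == Y)%MS.
Proof. by move=> sXY leYX; rewrite -(mxrank_leqif_eq sXY) eqn_leq leYX mxrankS. Qed.

Lemma col_mx_subl m1 m2 n (X : 'M[F]_(m1, n)) (Y : 'M[F]_(m2, n)) : (X <= col_mx X Y)%MS.
Proof. by rewrite -addsmxE addsmxSl. Qed.

Lemma col_mx_subr m1 m2 n (X : 'M[F]_(m1, n)) (Y : 'M[F]_(m2, n)) : (Y <= col_mx X Y)%MS.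
Proof. by rewrite -addsmxE addsmxSr. Qed.

Definition row2 (x y : F) : 'rV[F]_(1 + 1) := \row_(i < 1 + 1) nth 0 [:: x; y] i.

Lemma row2E (r : 'rV[F]_(1 + 1)) : r = row2 (r 0 0) (r 0 1).
Proof.
by apply/rowP => -[[|[|]] //= j]; rewrite !mxE; congr (r 0 _); apply: val_inj.
Qed.

Lemma mul_row2_col_mx n x y (q1 q2 : 'rV[F]_n) :
  row2 x y *m col_mx q1 q2 = x *: q1 + y *: q2.
Proof.
rewrite -[row2 x y]hsubmxK mul_row_col.
by rewrite [lsubmx _]mx11_scalar [rsubmx _]mx11_scalar !mul_scalar_mx !mxE.
Qed.

Lemma rank_col_mx_indep n (q1 q2 : 'rV[F]_n) :
  q1 != 0 -> (forall c, q2 != c *: q1) -> \rank (col_mx q1 q2) = 2%N.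
Proof.
move=> q1n0 q2_indep; apply/eqP; rewrite eqn_leq rank_leq_row /=.
apply: contraT; rewrite -ltnNge ltnS => rank_le1.
have /andP[_ /(submx_trans (col_mx_subr q1 q2))/submxP[D q2D]] :
    (q1 == col_mx q1 q2)%MS by apply: eqmx_sub_rank (col_mx_subl _ _) _; rewrite rank_rV q1n0.
by move: (q2_indep (D 0 0)); rewrite q2D [D]mx11_scalar mul_scalar_mx mxE /= mulr1n eqxx.
Qed.

Lemma rank_col_mx_scale n (z q : 'rV[F]_n) c :
  z != 0 -> z = c *: q -> \rank (col_mx z q) = 1%N.
Proof.
move=> zn0 zq; have qn0 : q != 0 by apply: contraNneq zn0; rewrite zq => ->; rewrite scaler0.
have rank_q : \rank q = 1%N by rewrite rank_rV qn0.
have rank_z : \rank z = 1%N by rewrite rank_rV zn0.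
apply/eqP; rewrite eqn_leq; apply/andP; split.
  by rewrite -[X in (_ <= X)%N]rank_q mxrankS // col_mx_sub submx_refl zq scalemx_sub.
by rewrite -[X in (X <= _)%N]rank_z mxrankS // col_mx_subl.
Qed.

Lemma eqmx_rank2 m n (C : 'M[F]_(2, n)) (D : 'M[F]_(m, n)) :
  \rank C = 2%N -> (\rank D <= 2)%N ->
  (row 0 C <= D)%MS -> (row 1 C <= D)%MS -> (C == D)%MS.
Proof.
move=> rkC rkD C0D C1D; apply: eqmx_sub_rank; last by rewrite rkC.
apply/row_subP => i.
by have [->|->] : i = 0 \/ i = 1 by case: i => -[|[|//]] ?; [left|right]; apply: val_inj.
Qed.

Lemma capmx_eq_rank m1 m2 m3 n (A : 'M[F]_(m1, n)) (B : 'M[F]_(m2, n)) (C : 'M[F]_(m3, n)) :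
  (C <= A)%MS -> (C <= B)%MS ->
  (\rank A + \rank B <= \rank (col_mx A B) + \rank C)%N -> (A :&: B == C)%MS.
Proof.
move=> sCA sCB rank_le; rewrite andbC eqmx_sub_rank ?sub_capmx ?sCA //.
by rewrite -(leq_add2l (\rank (A + B))) mxrank_sum_cap addsmxE.
Qed.

End RowSpaces.

Section Coordinates.
Variables (F : fieldType) (n : nat) (A : 'M[F]_(n, n + 1)).

Lemma exists_unit_col_mx m (B : 'M[F]_(m, n + 1)) :
  row_free A -> ~~ (B <= A)%MS -> exists2 p, (p <= B)%MS & col_mx A p \in unitmx.
Proof.
move=> freeA /row_subPn[i nBiA]; exists (row i B); first exact: row_sub.
have ltA : (A < col_mx A (row i B))%MS by rewrite ltmxE col_mx_subl col_mx_sub submx_refl.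
rewrite -row_full_unit /row_full eqn_leq rank_leq_col /=.
by move: (rank_ltmx ltA); rewrite (eqP freeA) -addn1.
Qed.

Variable p : 'rV[F]_(n + 1).

Definition coords (x : 'rV[F]_(n + 1)) : 'rV[F]_(n + 1) := x *m invmx (col_mx A p).
Definition ucoord x : 'rV[F]_n := lsubmx (coords x).
Definition tcoord x : F := rsubmx (coords x) 0 0.

Lemma ucoord_lincomb a b x y :
  ucoord (a *: x + b *: y) = a *: ucoord x + b *: ucoord y.
Proof. by rewrite /ucoord /coords mulmxDl -!scalemxAl linearD /= !linearZ. Qed.

Lemma tcoord_lincomb a b x y :
  tcoord (a *: x + b *: y) = a * tcoord x + b * tcoord y.
Proof. by rewrite /tcoord /coords mulmxDl -!scalemxAl linearD /= !linearZ /= !mxE. Qed.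

Lemma ucoordZ a x : ucoord (a *: x) = a *: ucoord x.
Proof. by have := ucoord_lincomb a 0 x x; rewrite !scale0r !addr0. Qed.

Lemma tcoordZ a x : tcoord (a *: x) = a * tcoord x.
Proof. by have := tcoord_lincomb a 0 x x; rewrite scale0r addr0 mul0r addr0. Qed.

Hypothesis unitAp : col_mx A p \in unitmx.

Lemma coordsK x : x = ucoord x *m A + tcoord x *: p.
Proof.
rewrite /ucoord /tcoord -mul_scalar_mx -mx11_scalar -mul_row_col hsubmxK.
by rewrite /coords mulmxKV.
Qed.

Lemma coords_lincomb u t :
  ucoord (u *m A + t *: p) = u /\ tcoord (u *m A + t *: p) = t.
Proof.
have -> : u *m A + t *: p = row_mx u t%:M *m col_mx A p.
  by rewrite mul_row_col mul_scalar_mx.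
by rewrite /ucoord /tcoord /coords mulmxK // row_mxKl row_mxKr mxE eqxx.
Qed.

Lemma ucoord_sub m k (B : 'M[F]_(m, n + 1)) (L : 'M[F]_(k, n)) z :
  row_free A -> (p <= B)%MS -> (A :&: B <= L *m A)%MS -> (z <= B)%MS ->
  (ucoord z <= L)%MS.
Proof.
move=> freeA pB capAB zB; rewrite -(submxMfree _ _ freeA).
apply: submx_trans capAB; rewrite sub_capmx submxMl /=.
have -> : ucoord z *m A = z - tcoord z *: p by rewrite {2}(coordsK z) addrK.
by rewrite addmx_sub // -scaleN1r !scalemx_sub.
Qed.

End Coordinates.

Lemma sum_digits_inj (N : nat) n (f g : 'I_n -> nat) :
  (forall i, f i < N)%N -> (forall i, g i < N)%N ->
  (\sum_(i < n) f i * N ^ i = \sum_(i < n) g i * N ^ i)%N -> f =1 g.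
Proof.
elim: n f g => [|n IH] f g ltfN ltgN; first by move=> _ [].
have N_gt0 : (0 < N)%N by apply: leq_ltn_trans (ltfN ord0).
have sum_lift (h : 'I_n.+1 -> nat) : (\sum_(i < n.+1) h i * N ^ i =
    h ord0 + N * \sum_(i < n) h (lift ord0 i) * N ^ i)%N.
  by rewrite big_ord_recl expn0 muln1 big_distrr; congr (_ + _);
     apply: eq_bigr => i _; rewrite /= expnS mulnCA.
rewrite !sum_lift => eq_sum.
have eq0 : f ord0 = g ord0.
  have := congr1 (modn^~ N) eq_sum.
  by rewrite ![(_ + N * _)%N]addnC ![(N * _)%N]mulnC !modnMDl !modn_small.
move: eq_sum; rewrite eq0 => /addnI/eqP; rewrite eqn_pmul2l // => /eqP eq_tail.
have := IH _ _ (fun i => ltfN _) (fun i => ltgN _) eq_tail.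
by move=> eq_lift i; case: (unliftP ord0 i) => [j ->|->].
Qed.

(* Kronecker substitution X_i := t ^ (N ^ i), N > every exponent, keeps the
   monomials of p apart, so it turns p into a nonzero univariate polynomial. *)
Lemma mpoly_nonvanish (F : closedFieldType) n (p : {mpoly F[n]}) :
  p != 0 -> exists v : 'I_n -> F, p.@[v] != 0.
Proof.
move=> pn0; pose N := msize p.
pose e (m : 'X_{1..n}) := (\sum_(i < n) m i * N ^ i)%N.
pose Q : {poly F} := \sum_(m <- msupp p) p@_m *: 'X^(e m).
have evalQ t : p.@[fun i => t ^+ (N ^ i)] = Q.[t].
  rewrite mevalE /Q horner_sum; apply: eq_bigr => m _.
  rewrite hornerZ hornerXn -prodrXr; congr (_ * _); apply: eq_bigr => i _.
  by rewrite -exprM mulnC.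
have ltN m i : m \in msupp p -> (m i < N)%N.
  move=> /msize_mdeg_lt; apply: leq_ltn_trans.
  by rewrite mdegE (bigD1 i) //= leq_addr.
have Qn0 : Q != 0.
  have lead_supp : mlead p \in msupp p by apply: mlead_supp.
  apply/eqP => /(congr1 (fun q : {poly F} => q`_(e (mlead p)))).
  rewrite coef0 /Q coef_sumMXn big_mkcond (bigD1_seq (mlead p)) ?msupp_uniq //=.
  rewrite eqxx big1_seq => [|m /andP[neq_m m_supp]].
    by rewrite addr0 => plead0; move: lead_supp; rewrite mcoeff_msupp plead0 eqxx.
  case: ifP => // /eqP eq_e; case/negP: neq_m; apply/eqP/mnmP.
  by apply: (sum_digits_inj (N := N)) eq_e => i; [apply: ltN m_supp | apply: ltN lead_supp].
have /closed_nonrootP[t Qtn0] := Qn0.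
by exists (fun i => t ^+ (N ^ i)); rewrite evalQ.
Qed.

Lemma evalvM f g x : evalv (f * g) x = evalv f x * evalv g x.
Proof. exact: mevalM. Qed.

Lemma evalv_nonvanish (g : vpoly) : g != 0 -> exists x, evalv g x != 0.
Proof.
move=> /mpoly_nonvanish[v gvn0]; exists (\row_i v i).
by rewrite /evalv (meval_eq (v2 := v)) // => i; rewrite mxE.
Qed.

Lemma evalv_neq0 (g : vpoly) x : evalv g x != 0 -> g != 0.
Proof. by apply: contraNneq => ->; rewrite /evalv meval0. Qed.

Lemma general_point_and P Q :
  general_point P -> general_point Q -> exists x, x != 0 /\ P x /\ Q x.
Proof.
move=> [g [gn0 [_ gP]]] [h [hn0 [_ hQ]]].
have X0n0 : 'X_0 != 0 :> vpoly.
  by apply: (@evalv_neq0 _ (const_mx 1)); rewrite /evalv mevalXU mxE oner_eq0.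
have [x] := evalv_nonvanish (mulf_neq0 (mulf_neq0 gn0 hn0) X0n0).
rewrite !evalvM !mulf_eq0 !negb_or /evalv mevalXU => /andP[/andP[gx hx] x0].
have xn0 : x != 0 by apply: contraNneq x0 => ->; rewrite mxE.
by exists x; split; [|split; [apply: gP | apply: hQ]].
Qed.

Definition linf (v : 'cV[algC]_6) : vpoly := \sum_(i < 6) v i 0 *: 'X_i.

Lemma evalv_linf v x : evalv (linf v) x = (x *m v) 0 0.
Proof.
rewrite /evalv /linf raddf_sum /= mxE; apply: eq_bigr => i _.
by rewrite mevalZ mevalXU mulrC.
Qed.

Lemma evalv_linf_lincomb a b v w x :
  evalv (linf (a *: v - b *: w)) x = a * evalv (linf v) x - b * evalv (linf w) x.
Proof. by rewrite !evalv_linf mulmxBr -!scalemxAr !mxE. Qed.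

Lemma linf_homog v : linf v \is 1.-homog.
Proof.
by apply: rpred_sum => i _; apply: dhomogZ; rewrite dhomogX; apply/eqP/mdeg1.
Qed.

Lemma restrict_linf v q w :
  restrict_line (linf v) q w = ((q *m v) 0 0)%:P + ((w *m v) 0 0) *: 'X.
Proof.
rewrite /restrict_line /linf !mxE [map_mpoly _ _]raddf_sum /= [meval _ _]raddf_sum /=.
rewrite rmorph_sum scaler_suml -big_split /=; apply: eq_bigr => i _.
rewrite map_mpolyZ mevalZ map_mpolyX mevalXU /= mulrDr polyCM -!mul_polyC.
by rewrite mulrCA polyCM mulrA (mulrC (v i 0)%:P).
Qed.

Lemma restrict_lineM f g q w :
  restrict_line (f * g) q w = restrict_line f q w * restrict_line g q w.
Proof. by rewrite /restrict_line rmorphM /= mevalM. Qed.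

Lemma coef1_mul_linear (a b c d : algC) :
  ((a%:P + b *: 'X) * (c%:P + d *: 'X))`_1 = a * d + b * c.
Proof.
rewrite coefM !big_ord_recl big_ord0 /= !coefD !coefZ !coefC !coefX /=.
by rewrite !mulr0 !mulr1 !addr0 !add0r mulrC.
Qed.

Lemma restrict_line_linf_mul_coef1 v v' q w :
  (restrict_line (linf v * linf v') q w)`_1 =
  evalv (linf v) q * evalv (linf v') w + evalv (linf v) w * evalv (linf v') q.
Proof. by rewrite restrict_lineM !restrict_linf coef1_mul_linear !evalv_linf. Qed.

Section CoordinateForms.
Variables (A : 'M[algC]_(5, 6)) (p : 'rV[algC]_6).

Definition ucol (i : 'I_5) : 'cV[algC]_6 := col (lshift 1 i) (invmx (col_mx A p)).
Definition tcol : 'cV[algC]_6 := col (rshift 5 0) (invmx (col_mx A p)).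

Lemma mul_ucol x i : (x *m ucol i) 0 0 = ucoord A p x 0 i.
Proof. by rewrite /ucoord /coords !mxE; apply: eq_bigr => k _; rewrite mxE. Qed.

Lemma mul_tcol x : (x *m tcol) 0 0 = tcoord A p x.
Proof. by rewrite /tcoord /coords !mxE; apply: eq_bigr => k _; rewrite mxE. Qed.

End CoordinateForms.

Definition ruling_mx (a b : algC) : 'M[algC]_(1 + 1, 5) :=
  col_mx (scroll_pt a b 1 0) (scroll_pt a b 0 1).
Definition directrix_mx : 'M[algC]_(1 + 1, 5) :=
  col_mx (scroll_pt 1 0 1 0) (scroll_pt 0 1 1 0).

Lemma scroll_pt_ruling a b k l m :
  scroll_pt (k * a) (k * b) l m = row2 (l * k) (m * k ^+ 2) *m ruling_mx a b.
Proof.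
by rewrite mul_row2_col_mx; apply/rowP => -[[|[|[|[|[|//]]]]] ?]; rewrite !mxE /=; ring.
Qed.

Lemma scroll_pt_directrix a b l :
  scroll_pt a b l 0 = row2 (a * l) (b * l) *m directrix_mx.
Proof.
by rewrite mul_row2_col_mx; apply/rowP => -[[|[|[|[|[|//]]]]] ?]; rewrite !mxE /=; ring.
Qed.

Lemma scroll_pt_addE a1 b1 l1 m1 a2 b2 l2 m2 a b l m :
  scroll_pt a1 b1 l1 m1 + scroll_pt a2 b2 l2 m2 = scroll_pt a b l m ->
  [/\ a1 * l1 + a2 * l2 = a * l, b1 * l1 + b2 * l2 = b * l,
      a1 ^+ 2 * m1 + a2 ^+ 2 * m2 = a ^+ 2 * m,
      a1 * b1 * m1 + a2 * b2 * m2 = a * b * m &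
      b1 ^+ 2 * m1 + b2 ^+ 2 * m2 = b ^+ 2 * m].
Proof.
move=> E; have e k (lt_k5 : (k < 5)%N) := congr1 (fun v : 'rV_5 => v 0 (Ordinal lt_k5)) E.
by move: (e 0%N isT) (e 1%N isT) (e 2%N isT) (e 3%N isT) (e 4%N isT); rewrite !mxE.
Qed.

Definition off_directrix (a b m : algC) : bool := (m != 0) && ((a != 0) || (b != 0)).

Lemma on_directrix_conic a b m : ~~ off_directrix a b m ->
  [/\ a ^+ 2 * m = 0, a * b * m = 0 & b ^+ 2 * m = 0].
Proof.
rewrite negb_and negbK negb_or !negbK => /orP[/eqP->|/andP[/eqP-> /eqP->]];
  by split; ring.
Qed.

Lemma scroll_pt_on_directrix a b l m :
  ~~ off_directrix a b m -> scroll_pt a b l m = scroll_pt a b l 0.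
Proof.
move=> /on_directrix_conic[z2 z3 z4].
by apply/rowP => -[[|[|[|[|[|//]]]]] ?]; rewrite !mxE /= ?z2 ?z3 ?z4 ?mulr0.
Qed.

Lemma cross0_proportional (F : fieldType) (a1 b1 x y : F) :
  (a1 != 0) || (b1 != 0) -> a1 * y = b1 * x -> exists k, x = k * a1 /\ y = k * b1.
Proof.
case/orP=> [a1n0|b1n0] cross0.
  exists (x / a1); split; first by rewrite divfK.
  by apply: (mulfI a1n0); rewrite cross0; field.
exists (y / b1); split; last by rewrite divfK.
by apply: (mulfI b1n0); rewrite -cross0; field.
Qed.

(* Read on the coordinates (x2, x3, x4) of scroll points, which lie on the
   conic x2 x4 = x3^2: a sum of two points of the conic is again on it only if
   one of them is zero or they are proportional. *)
Lemma conic_sum_det (R : comPzRingType) (a1 b1 m1 a2 b2 m2 a b m : R) :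
  a1 ^+ 2 * m1 + a2 ^+ 2 * m2 = a ^+ 2 * m ->
  a1 * b1 * m1 + a2 * b2 * m2 = a * b * m ->
  b1 ^+ 2 * m1 + b2 ^+ 2 * m2 = b ^+ 2 * m ->
  m1 * m2 * (a1 * b2 - b1 * a2) ^+ 2 = 0.
Proof.
move=> E2 E3 E4; transitivity ((a ^+ 2 * m) * (b ^+ 2 * m) - (a * b * m) ^+ 2);
  last by ring.
by rewrite -E2 -E3 -E4; ring.
Qed.

Lemma scroll_sum_ruling a1 b1 l1 m1 a2 b2 l2 m2 a b l m :
  scroll_pt a1 b1 l1 m1 + scroll_pt a2 b2 l2 m2 = scroll_pt a b l m ->
  off_directrix a1 b1 m1 -> exists r, scroll_pt a2 b2 l2 m2 = r *m ruling_mx a1 b1.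
Proof.
move=> /scroll_pt_addE[E0 E1 E2 E3 E4] /andP[m1n0 ab1].
case: (boolP (off_directrix a2 b2 m2)) => [/andP[m2n0 _]|on2].
  have /eqP := conic_sum_det E2 E3 E4.
  rewrite 2!mulf_eq0 (negbTE m1n0) (negbTE m2n0) expf_eq0 subr_eq0 /= => /eqP.
  move=> /(cross0_proportional ab1)[k [-> ->]].
  by exists (row2 (l2 * k) (m2 * k ^+ 2)); rewrite scroll_pt_ruling.
have [z2 z3 z4] := on_directrix_conic on2.
rewrite z2 z3 z4 !addr0 in E2 E3 E4.
have /eqP : m1 * - m * (a1 * b - b1 * a) ^+ 2 = 0.
  by apply: (@conic_sum_det _ _ _ _ _ _ _ 0 0 0); rewrite ?E2 ?E3 ?E4; ring.
rewrite 2!mulf_eq0 oppr_eq0 (negbTE m1n0) expf_eq0 subr_eq0 /=.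
case/orP => [/eqP m0|/eqP/(cross0_proportional ab1)[k [ak bk]]].
  move: E2 E4 ab1; rewrite m0 !mulr0 => /eqP E2 /eqP E4.
  by rewrite !(mulf_eq0 (_ ^+ 2)) (negbTE m1n0) !orbF !expf_eq0 /= in E2 E4; rewrite E2 E4.
exists (row2 (k * l - l1) 0); rewrite scroll_pt_on_directrix // mul_row2_col_mx.
apply/rowP => -[[|[|[|[|[|//]]]]] ?]; rewrite !mxE /= ?mulr0 ?mul0r ?addr0 //.
- by apply: (addrI (a1 * l1)); rewrite E0 ak; ring.
by apply: (addrI (b1 * l1)); rewrite E1 bk; ring.
Qed.

Lemma scroll_line_cases (A : 'M[algC]_(5, 6)) (C : 'M[algC]_(2, 6)) :
  row_free A -> \rank C = 2%N -> (forall x, (x <= C)%MS -> on_scroll A x) ->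
  is_ruling_line A C \/ is_directrix A C.
Proof.
move=> freeA rkC onS.
have [a1 [b1 [l1 [m1 e1]]]] := onS _ (row_sub 0 C).
have [a2 [b2 [l2 [m2 e2]]]] := onS _ (row_sub 1 C).
have [a [b [l [m e]]]] := onS _ (addmx_sub (row_sub 0 C) (row_sub 1 C)).
have E : scroll_pt a1 b1 l1 m1 + scroll_pt a2 b2 l2 m2 = scroll_pt a b l m.
  by apply: (row_free_inj freeA); rewrite mulmxDl -e1 -e2 -e.
have eqC (M : 'M_(1 + 1, 5)) r1 r2 :
    row 0 C = r1 *m M *m A -> row 1 C = r2 *m M *m A -> (C == M *m A)%MS.
  move=> C0 C1; apply: eqmx_rank2 => //; first exact: rank_leq_row.
    by rewrite C0 -mulmxA; apply: submxMl.
  by rewrite C1 -mulmxA; apply: submxMl.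
have ruling_pt a0 b0 l0 m0 : scroll_pt a0 b0 l0 m0 = row2 l0 m0 *m ruling_mx a0 b0.
  by have := scroll_pt_ruling a0 b0 1 l0 m0; rewrite !mul1r expr1n !mulr1.
have ruling a0 b0 m0 r1 r2 : off_directrix a0 b0 m0 ->
    row 0 C = r1 *m ruling_mx a0 b0 *m A -> row 1 C = r2 *m ruling_mx a0 b0 *m A ->
    is_ruling_line A C.
  move=> /andP[_ ab0] C0 C1; exists a0, b0; split; first by case/orP: ab0; [left|right].
  by rewrite -mul_col_mx; exact: eqC C0 C1.
case: (boolP (off_directrix a1 b1 m1)) => [off1|on1].
  have [r2 e2'] := scroll_sum_ruling E off1.
  by left; apply: (ruling _ _ _ (row2 l1 m1) r2 off1); rewrite ?e1 ?e2 ?e2' -?ruling_pt.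
case: (boolP (off_directrix a2 b2 m2)) => [off2|on2].
  rewrite addrC in E; have [r1 e1'] := scroll_sum_ruling E off2.
  by left; apply: (ruling _ _ _ r1 (row2 l2 m2) off2); rewrite ?e1 ?e2 ?e1' -?ruling_pt.
right; rewrite /is_directrix -mul_col_mx.
apply: (eqC _ (row2 (a1 * l1) (b1 * l1)) (row2 (a2 * l2) (b2 * l2))).
  by rewrite e1 scroll_pt_on_directrix // scroll_pt_directrix.
by rewrite e2 scroll_pt_on_directrix // scroll_pt_directrix.
Qed.

Lemma secant_line_span Y M x : secant_line Y M -> (x <= M)%MS ->
  exists q1 q2 (al be : algC),
    [/\ Y q1, Y q2, (q1 <= M)%MS, (q2 <= M)%MS & x = al *: q1 + be *: q2].
Proof.
move=> [rkM [q1 [q2 [[q1M q2M rkq Yq1 Yq2] _]]]] xM.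
have /andP[_ Mq] : (col_mx q1 q2 == M)%MS.
  by apply: eqmx_sub_rank; rewrite ?col_mx_sub ?q1M ?q2M ?rkM ?rkq.
have /submxP[r ->] := submx_trans xM Mq.
by exists q1, q2, (r 0 0), (r 0 1); split; rewrite // {1}(row2E r) mul_row2_col_mx.
Qed.

Lemma on_scroll_sub A x : on_scroll A x -> (x <= A)%MS.
Proof. by move=> [a [b [l [m ->]]]]; apply: submxMl. Qed.

Section ScrollCoordinates.
Variables (A : 'M[algC]_(5, 6)) (p : 'rV[algC]_6).
Hypothesis unitAp : col_mx A p \in unitmx.

Lemma tcoord_scroll x : on_scroll A x -> tcoord A p x = 0.
Proof.
by move=> [a [b [l [m ->]]]]; have [_] := coords_lincomb unitAp (scroll_pt a b l m) 0;
  rewrite scale0r addr0.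
Qed.

Lemma ucoord_scroll x : on_scroll A x -> exists a b l m, ucoord A p x = scroll_pt a b l m.
Proof.
move=> [a [b [l [m ->]]]]; exists a, b, l, m.
by have [] := coords_lincomb unitAp (scroll_pt a b l m) 0; rewrite scale0r addr0.
Qed.

End ScrollCoordinates.

Local Notation o0 := (@Ordinal 5 0 isT).
Local Notation o1 := (@Ordinal 5 1 isT).
Local Notation o2 := (@Ordinal 5 2 isT).
Local Notation o3 := (@Ordinal 5 3 isT).
Local Notation o4 := (@Ordinal 5 4 isT).

Definition conic_form (u : 'rV[algC]_5) : algC := u 0 o2 * u 0 o4 - u 0 o3 ^+ 2.

Lemma conic_form_scroll_directrix al a b l m v :
  (v <= directrix_mx)%MS -> conic_form (al *: scroll_pt a b l m + v) = 0.
Proof.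
by case/submxP=> r ->; rewrite (row2E r) mul_row2_col_mx /conic_form !mxE /=; ring.
Qed.

Lemma conic_form_directrix v : (v <= directrix_mx)%MS -> conic_form v = 0.
Proof. by move=> vD; have := conic_form_scroll_directrix 0 0 0 0 0 vD; rewrite scale0r add0r. Qed.

Lemma directrix_defective (A : 'M[algC]_(5, 6)) (B : 'M[algC]_(3, 6)) p :
  col_mx A p \in unitmx ->
  (forall z, (z <= B)%MS -> (ucoord A p z <= directrix_mx)%MS) ->
  secant_defective (scroll_plane_union A B).
Proof.
move=> unitAp planeD.
pose g := linf (tcol A p) *
  (linf (ucol A p o2) * linf (ucol A p o4) - linf (ucol A p o3) ^+ 2).
have evalg x : evalv g x = tcoord A p x * conic_form (ucoord A p x).
  rewrite /g evalvM /evalv mevalB expr2 !mevalM -!/(evalv _ _) !evalv_linf.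
  by rewrite mul_tcol !mul_ucol /conic_form expr2.
exists g; split; [|split].
- pose u0 : 'rV[algC]_5 := \row_(i < 5) nth 0 [:: 0; 0; 1; 0; 1] i.
  apply: (@evalv_neq0 _ (u0 *m A + 1 *: p)).
  rewrite evalg; have [-> ->] := coords_lincomb unitAp u0 1.
  by rewrite /conic_form !mxE /= !mul1r expr0n /= subr0 oner_eq0.
- exists 3%N; rewrite -dhomogE (@dhomogM _ _ _ 1 _ 2) ?linf_homog //.
  by rewrite rpredB ?dhomogMn ?(@dhomogM _ _ _ 1 _ 1) ?linf_homog.
move=> x _; rewrite evalg mulf_eq0 negb_or => /andP[tx_n0 conic_n0] M xM secM.
have [q1 [q2 [al [be [Yq1 Yq2 _ _ xE]]]]] := secant_line_span secM xM.
rewrite xE ucoord_lincomb in conic_n0; rewrite xE tcoord_lincomb in tx_n0.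
have scroll_plane q1' q2' al' be' : on_scroll A q1' -> (q2' <= B)%MS ->
    conic_form (al' *: ucoord A p q1' + be' *: ucoord A p q2') != 0 -> False.
  move=> /(ucoord_scroll unitAp)[a [b [l [m ->]]]] q2B /eqP[].
  exact/conic_form_scroll_directrix/scalemx_sub/planeD.
case: Yq1 Yq2 => [S1|P1] [S2|P2].
- by case/eqP: tx_n0; rewrite !(tcoord_scroll unitAp) // !mulr0 addr0.
- exact: scroll_plane S1 P2 conic_n0.
- by apply: (scroll_plane _ _ be al S2 P1); rewrite addrC.
case/eqP: conic_n0; apply/conic_form_directrix/addmx_sub; exact/scalemx_sub/planeD.
Qed.

Section RulingProjection.
Variables a0 b0 : algC.

(* The projection of P^4 from the ruling line of (a0 : b0) onto P^2 has
   coordinates fproj1, fproj2, fproj3; restricted to the scroll it is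
   birational, with inverse scroll_section off the line fproj_det = 0. *)
Definition fproj1 (u : 'rV[algC]_5) := b0 * u 0 o0 - a0 * u 0 o1.
Definition fproj2 (u : 'rV[algC]_5) := b0 * u 0 o2 - a0 * u 0 o3.
Definition fproj3 (u : 'rV[algC]_5) := b0 * u 0 o3 - a0 * u 0 o4.
Definition fproj_det u := b0 * fproj2 u - a0 * fproj3 u.
Definition scroll_section u :=
  scroll_pt (fproj2 u) (fproj3 u) (fproj1 u / fproj_det u) (fproj_det u)^-1.

Lemma fproj_lincomb al be u v :
  [/\ fproj1 (al *: u + be *: v) = al * fproj1 u + be * fproj1 v,
      fproj2 (al *: u + be *: v) = al * fproj2 u + be * fproj2 v &
      fproj3 (al *: u + be *: v) = al * fproj3 u + be * fproj3 v].
Proof. by rewrite /fproj1 /fproj2 /fproj3 !mxE; split; ring. Qed.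

Lemma fproj_scroll_pt a b l m :
  [/\ fproj1 (scroll_pt a b l m) = l * (b0 * a - a0 * b),
      fproj2 (scroll_pt a b l m) = m * a * (b0 * a - a0 * b) &
      fproj3 (scroll_pt a b l m) = m * b * (b0 * a - a0 * b)].
Proof. by rewrite /fproj1 /fproj2 /fproj3 !mxE /=; split; ring. Qed.

Lemma fproj_ruling v : (v <= ruling_mx a0 b0)%MS ->
  [/\ fproj1 v = 0, fproj2 v = 0 & fproj3 v = 0].
Proof.
case/submxP=> r ->; rewrite (row2E r) mul_row2_col_mx /fproj1 /fproj2 /fproj3 !mxE /=.
by split; ring.
Qed.

Lemma ruling_fproj0 v : (a0 != 0) || (b0 != 0) ->
  fproj1 v = 0 -> fproj2 v = 0 -> fproj3 v = 0 -> (v <= ruling_mx a0 b0)%MS.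
Proof.
move=> ab0 /eqP f1 /eqP f2 /eqP f3; move: f1 f2 f3; rewrite !subr_eq0 => /eqP f1 /eqP f2 /eqP f3.
have [k [v0 v1]] := cross0_proportional ab0 (esym f1).
have [k' [v2 v3]] := cross0_proportional ab0 (esym f2).
have [k'' [v3' v4]] := cross0_proportional ab0 (esym f3).
have [c [k'E k''E]] : exists c, k' = c * a0 /\ k'' = c * b0.
  by apply: cross0_proportional ab0 _; rewrite mulrC -v3' v3 mulrC.
apply/submxP; exists (row2 k c); rewrite mul_row2_col_mx.
apply/rowP => -[[|[|[|[|[|//]]]]] ?]; rewrite !mxE /=.
- by rewrite (_ : Ordinal _ = o0) ?v0; [ring | apply: val_inj].
- by rewrite (_ : Ordinal _ = o1) ?v1; [ring | apply: val_inj].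
- by rewrite (_ : Ordinal _ = o2) ?v2 ?k'E; [ring | apply: val_inj].
- by rewrite (_ : Ordinal _ = o3) ?v3 ?k'E; [ring | apply: val_inj].
by rewrite (_ : Ordinal _ = o4) ?v4 ?k''E; [ring | apply: val_inj].
Qed.

Lemma fproj_scroll_section u : fproj_det u != 0 ->
  [/\ fproj1 (scroll_section u) = fproj1 u, fproj2 (scroll_section u) = fproj2 u &
      fproj3 (scroll_section u) = fproj3 u].
Proof.
rewrite /scroll_section /fproj_det.
set w1 := fproj1 u; set w2 := fproj2 u; set w3 := fproj3 u => det_n0.
by rewrite /fproj1 /fproj2 /fproj3 !mxE /=; split; field.
Qed.

Lemma scroll_section_lincomb al a b l m v :
  (v <= ruling_mx a0 b0)%MS ->
  fproj_det (al *: scroll_pt a b l m + v) != 0 ->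
  scroll_section (al *: scroll_pt a b l m + v) = al *: scroll_pt a b l m.
Proof.
move=> /fproj_ruling[v1 v2 v3].
have [s1 s2 s3] := fproj_scroll_pt a b l m.
rewrite -[v]scale1r /scroll_section /fproj_det.
have [-> -> ->] := fproj_lincomb al 1 (scroll_pt a b l m) v.
rewrite s1 s2 s3 v1 v2 v3 !mulr0 !addr0.
set d := b0 * a - a0 * b => det_n0.
have detE : b0 * (al * (m * a * d)) - a0 * (al * (m * b * d)) = al * m * d ^+ 2 by rewrite /d; ring.
move: det_n0; rewrite detE 2!mulf_eq0 expf_eq0 /= !negb_or => /andP[/andP[al_n0 m_n0] d_n0].
by apply/rowP => -[[|[|[|[|[|//]]]]] ?]; rewrite !mxE /=; field; rewrite ?al_n0 ?m_n0 ?d_n0.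
Qed.

End RulingProjection.

Section RulingCase.
Variables (A : 'M[algC]_(5, 6)) (B : 'M[algC]_(3, 6)) (p : 'rV[algC]_6) (a0 b0 : algC).
Hypotheses (unitAp : col_mx A p \in unitmx) (ab0 : (a0 != 0) || (b0 != 0)).
Hypothesis plane_ruling : forall z, (z <= B)%MS -> (ucoord A p z <= ruling_mx a0 b0)%MS.
Hypothesis ruling_plane :
  forall u t, (u <= ruling_mx a0 b0)%MS -> ((u *m A + t *: p)%R <= B)%MS.

Local Notation Y := (scroll_plane_union A B).
Local Notation u x := (ucoord A p x).
Local Notation t x := (tcoord A p x).

Lemma fproj_plane z : (z <= B)%MS -> fproj2 a0 b0 (u z) = 0.
Proof. by move=> /plane_ruling/fproj_ruling[]. Qed.

Definition fproj2_col := b0 *: ucol A p o2 - a0 *: ucol A p o3.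
Definition fproj3_col := b0 *: ucol A p o3 - a0 *: ucol A p o4.

Lemma evalv_fproj2 z : evalv (linf fproj2_col) z = fproj2 a0 b0 (u z).
Proof. by rewrite evalv_linf_lincomb !evalv_linf !mul_ucol. Qed.

Lemma evalv_fproj_det z :
  evalv (linf (b0 *: fproj2_col - a0 *: fproj3_col)) z = fproj_det a0 b0 (u z).
Proof. by rewrite !evalv_linf_lincomb !evalv_linf !mul_ucol. Qed.

Definition union_eqn := linf (tcol A p) * linf fproj2_col.

Lemma union_eqn_vanishes : vanishes_on Y union_eqn.
Proof.
move=> z Yz; rewrite /union_eqn evalvM evalv_linf mul_tcol evalv_fproj2.
by case: Yz => [/(tcoord_scroll unitAp)->|/fproj_plane->]; rewrite ?mul0r ?mulr0.
Qed.

Lemma union_eqn_restrict_coef1 q w : (restrict_line union_eqn q w)`_1 =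
  t q * fproj2 a0 b0 (u w) + t w * fproj2 a0 b0 (u q).
Proof.
by rewrite restrict_line_linf_mul_coef1 !evalv_linf !mul_tcol -!evalv_linf !evalv_fproj2.
Qed.

Section GeneralPoint.
Variable x : 'rV[algC]_6.
Hypotheses (tx_n0 : t x != 0) (f2x_n0 : fproj2 a0 b0 (u x) != 0)
  (detx_n0 : fproj_det a0 b0 (u x) != 0).

Let s := scroll_section a0 b0 (u x) *m A.
Let pi := x - s.

Lemma coords_scroll_part : u s = scroll_section a0 b0 (u x) /\ t s = 0.
Proof.
by have := coords_lincomb unitAp (scroll_section a0 b0 (u x)) 0; rewrite scale0r addr0.
Qed.

Lemma ucoord_plane_part_ruling : (u x - scroll_section a0 b0 (u x) <= ruling_mx a0 b0)%MS.
Proof.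
have [l1 l2 l3] := fproj_lincomb a0 b0 1 (-1) (u x) (scroll_section a0 b0 (u x)).
have [s1 s2 s3] := fproj_scroll_section detx_n0.
rewrite scale1r scaleN1r s1 s2 s3 !mulN1r !mul1r !subrr in l1 l2 l3.
exact: ruling_fproj0.
Qed.

Lemma plane_partE : pi = (u x - scroll_section a0 b0 (u x)) *m A + t x *: p.
Proof. by rewrite /pi /s {1}(coordsK unitAp x) addrAC -mulmxBl. Qed.

Lemma coords_plane_part : u pi = u x - scroll_section a0 b0 (u x) /\ t pi = t x.
Proof. by rewrite plane_partE; apply: coords_lincomb. Qed.

Lemma scroll_part_on_scroll : on_scroll A s.
Proof. by rewrite /s /scroll_section; do 4!eexists. Qed.

Lemma plane_part_in_plane : (pi <= B)%MS.
Proof. by rewrite plane_partE; apply/ruling_plane/ucoord_plane_part_ruling. Qed.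

Lemma fproj2_scroll_part : fproj2 a0 b0 (u s) = fproj2 a0 b0 (u x).
Proof.
by have [-> _] := coords_scroll_part; have [_ -> _] := fproj_scroll_section detx_n0.
Qed.

Lemma fproj2_plane_part : fproj2 a0 b0 (u pi) = 0.
Proof. exact: fproj_plane plane_part_in_plane. Qed.

Lemma rank_scroll_plane_parts : \rank (col_mx s pi) = 2%N.
Proof.
apply: rank_col_mx_indep => [|c].
  apply: contraNneq f2x_n0 => s0; rewrite -fproj2_scroll_part s0.
  by rewrite -(scale0r 0) ucoordZ scale0r /fproj2 !mxE !mulr0 subrr.
apply: contraNneq tx_n0 => piE.
by have [_ <-] := coords_plane_part; rewrite piE tcoordZ (proj2 coords_scroll_part) mulr0.
Qed.

Lemma secant_points z : (z <= col_mx s pi)%MS -> z != 0 -> Y z ->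
  \rank (col_mx z s) = 1%N \/ \rank (col_mx z pi) = 1%N.
Proof.
case/submxP=> r zE z_n0; rewrite (row2E r) mul_row2_col_mx in zE.
have [_ ts] := coords_scroll_part; have [_ tpi] := coords_plane_part.
case=> [Sz|Pz].
  have be0 : r 0 1 = 0.
    move: (tcoord_scroll unitAp Sz); rewrite zE tcoord_lincomb ts tpi mulr0 add0r.
    by move/eqP; rewrite mulf_eq0 (negbTE tx_n0) orbF => /eqP.
  by left; apply: (rank_col_mx_scale (c := r 0 0)); rewrite // zE be0 scale0r addr0.
have al0 : r 0 0 = 0.
  have [_ f2 _] := fproj_lincomb a0 b0 (r 0 0) (r 0 1) (u s) (u pi).
  move: f2; rewrite -ucoord_lincomb -zE fproj_plane // fproj2_scroll_part fproj2_plane_part.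
  by rewrite mulr0 addr0 => /esym/eqP; rewrite mulf_eq0 (negbTE f2x_n0) orbF => /eqP.
by right; apply: (rank_col_mx_scale (c := r 0 1)); rewrite // zE al0 scale0r add0r.
Qed.

Lemma secant_scroll_plane_parts : secant_line Y (col_mx s pi).
Proof.
have [_ ts] := coords_scroll_part; have [_ tpi] := coords_plane_part.
split; first exact: rank_scroll_plane_parts.
exists s, pi; split; first split.
- exact: col_mx_subl.
- exact: (col_mx_subr s pi).
- exact: rank_scroll_plane_parts.
- by left; apply: scroll_part_on_scroll.
- by right; apply: plane_part_in_plane.
split; first exact: secant_points.
by split; exists union_eqn; split; rewrite ?union_eqn_restrict_coef1 ?ts ?tpi
  ?fproj2_plane_part ?fproj2_scroll_part ?mul0r ?mulr0 ?add0r ?addr0 ?mulf_neq0 //;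
  apply: union_eqn_vanishes.
Qed.

Lemma scroll_part_of_decomp qs qp al be : on_scroll A qs -> (qp <= B)%MS ->
  x = al *: qs + be *: qp -> s = al *: qs.
Proof.
move=> Sqs Pqp xE; have [a [b [l [m uqs]]]] := ucoord_scroll unitAp Sqs.
have qsE : qs = scroll_pt a b l m *m A.
  by rewrite {1}(coordsK unitAp qs) (tcoord_scroll unitAp Sqs) scale0r addr0 uqs.
have uxE : u x = al *: scroll_pt a b l m + be *: u qp by rewrite xE ucoord_lincomb uqs.
rewrite /s uxE scroll_section_lincomb -?uxE ?scalemx_sub ?plane_ruling //.
by rewrite qsE scalemxAl.
Qed.

Lemma secant_unique M : secant_line Y M -> (x <= M)%MS -> (col_mx s pi == M)%MS.
Proof.
move=> secM xM; have [rkM _] := secM.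
suff sM : (s <= M)%MS.
  apply: eqmx_sub_rank; last by rewrite rkM rank_scroll_plane_parts.
  by rewrite col_mx_sub sM addmx_sub // -scaleN1r scalemx_sub.
have [q1 [q2 [al [be [Yq1 Yq2 q1M q2M xE]]]]] := secant_line_span secM xM.
case: Yq1 Yq2 => [S1|P1] [S2|P2].
- case/eqP: tx_n0; rewrite xE tcoord_lincomb.
  by rewrite !(tcoord_scroll unitAp) // !mulr0 addr0.
- by rewrite (scroll_part_of_decomp S1 P2 xE) scalemx_sub.
- by rewrite (scroll_part_of_decomp S2 P1 (etrans xE (addrC _ _))) scalemx_sub.
case/eqP: f2x_n0; rewrite xE ucoord_lincomb.
by have [_ -> _] := fproj_lincomb a0 b0 al be (u q1) (u q2); rewrite !fproj_plane // !mulr0 addr0.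
Qed.

End GeneralPoint.

Lemma ruling_OADP : OADP Y.
Proof.
pose g := union_eqn * linf (b0 *: fproj2_col - a0 *: fproj3_col).
have evalg z : evalv g z = t z * fproj2 a0 b0 (u z) * fproj_det a0 b0 (u z).
  by rewrite /g /union_eqn !evalvM evalv_linf mul_tcol evalv_fproj2 evalv_fproj_det.
exists g; split; [|split].
- have [d e_n0] : exists d, b0 - a0 * d != 0.
    have [b00|] := eqVneq b0 0; last by exists 0; rewrite mulr0 subr0.
    exists (- a0^-1); move: ab0; rewrite b00 eqxx orbF => a0n0.
    by rewrite mulrN divff // sub0r opprK oner_eq0.
  apply: (@evalv_neq0 _ (scroll_pt 1 d 0 1 *m A + 1 *: p)).
  rewrite evalg; have [-> ->] := coords_lincomb unitAp (scroll_pt 1 d 0 1) 1.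
  have [_ f2 f3] := fproj_scroll_pt a0 b0 1 d 0 1.
  rewrite /fproj_det f2 f3 [X in X != 0](_ : _ = (b0 - a0 * d) ^+ 3) ?expf_neq0 //.
  by ring.
- exists 3%N; rewrite -dhomogE (@dhomogM _ _ _ 2 _ 1) ?linf_homog //.
  by rewrite (@dhomogM _ _ _ 1 _ 1) ?linf_homog.
move=> x _; rewrite evalg !mulf_eq0 !negb_or => /andP[/andP[tx f2x] detx].
set s := scroll_section a0 b0 (u x) *m A.
have xE : x = s + (x - s) by rewrite addrC subrK.
split.
  exists (col_mx s (x - s)); split; first exact: secant_scroll_plane_parts.
  by rewrite {1}xE addmx_sub ?col_mx_subl ?(col_mx_subr s (x - s)).
move=> M1 M2 secM1 xM1 secM2 xM2.
have /andP[sM1 M1s] := secant_unique tx f2x detx secM1 xM1.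
have /andP[sM2 M2s] := secant_unique tx f2x detx secM2 xM2.
by rewrite (submx_trans M1s sM2) (submx_trans M2s sM1).
Qed.

End RulingCase.

Lemma OADP_not_secant_defective Y : OADP Y -> ~ secant_defective Y.
Proof.
move=> oadp defective.
have [x [_ [[[M [secM xM]] _] nosec]]] := general_point_and oadp defective.
exact: nosec M xM secM.
Qed.

Lemma scroll_plane_coords (A : 'M[algC]_(5, 6)) (B : 'M[algC]_(3, 6)) (C : 'M[algC]_(2, 6)) :
  row_free A -> \rank B = 3%N -> \rank C = 2%N -> \rank (col_mx A B) = 6%N ->
  (forall x, (on_scroll A x /\ (x <= B)%MS) <-> (x <= C)%MS) ->
  exists2 p, col_mx A p \in unitmx & forall k (L : 'M[algC]_(k, 5)), (C == L *m A)%MS ->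
    (forall z, (z <= B)%MS -> (ucoord A p z <= L)%MS) /\
    (forall u t, (u <= L)%MS -> ((u *m A + t *: p)%R <= B)%MS).
Proof.
move=> freeA rkB rkC rkAB meet.
have [CA CB] : (C <= A)%MS /\ (C <= B)%MS.
  by split; apply/row_subP => i; have /meet[/on_scroll_sub] := row_sub i C.
have /andP[capAB_C _] : (A :&: B == C)%MS.
  by apply: capmx_eq_rank; rewrite ?(eqP freeA) ?rkB ?rkAB ?rkC.
have BnA : ~~ (B <= A)%MS.
  apply: contraTN isT => BA; have := mxrankS (_ : col_mx A B <= A)%MS.
  by rewrite col_mx_sub submx_refl BA rkAB (eqP freeA) => /(_ isT).
have [p pB unitAp] := exists_unit_col_mx freeA BnA.
exists p => // k L /andP[CL LC]; split=> [z zB|u t uL].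
  exact: ucoord_sub freeA pB (submx_trans capAB_C CL) zB.
by rewrite addmx_sub ?scalemx_sub // (submx_trans (submxMr A uL)) ?(submx_trans LC).
Qed.

Theorem proposition3p3 (A : 'M[algC]_(5, 6)) (B : 'M[algC]_(3, 6))
    (C : 'M[algC]_(2, 6)) :
  row_free A -> \rank B = 3%N -> \rank C = 2%N ->
  \rank (col_mx A B) = 6%N ->
  (forall x : 'rV[algC]_6, (on_scroll A x /\ (x <= B)%MS) <-> (x <= C)%MS) ->
  (OADP (scroll_plane_union A B) <-> is_ruling_line A C) /\
  (secant_defective (scroll_plane_union A B) <-> is_directrix A C).
Proof.
move=> freeA rkB rkC rkAB meet.
have [p unitAp planeL] := scroll_plane_coords freeA rkB rkC rkAB meet.
have ruling_OADP : is_ruling_line A C -> OADP (scroll_plane_union A B).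
  move=> [a0 [b0 [ab0]]]; rewrite -mul_col_mx => /planeL[plane_ruling ruling_plane].
  apply: ruling_OADP unitAp _ plane_ruling ruling_plane.
  by case: ab0 => ->; rewrite ?orbT.
have directrix_defective : is_directrix A C -> secant_defective (scroll_plane_union A B).
  rewrite /is_directrix -mul_col_mx => /planeL[plane_directrix _].
  exact: directrix_defective unitAp plane_directrix.
have onS x : (x <= C)%MS -> on_scroll A x by move/meet=> [].
have [ruling|directrix] := scroll_line_cases freeA rkC onS.
  have oadp := ruling_OADP ruling.
  split; first by split.
  split; first by move/(OADP_not_secant_defective oadp).
  by move/directrix_defective.
have defective := directrix_defective directrix.
split; last by split.
split; last by move/ruling_OADP.
by move/OADP_not_secant_defective.
Qed.
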